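(* Let $n$ be a nonnegative integer. Then $$\sum_{r=0}^n(-1)^{r+n}\zeta(\{1\}^r,n+2-r)=\begin{cases}\zeta^\star(\{2\}^{m+1}),& n=2m,\\ 0,& n=2m+1.\end{cases}$$
   Context: $\zeta(\alpha_1,\ldots,\alpha_k)=\sum_{1\le k_1<\cdots<k_k}k_1^{-\alpha_1}\cdots k_k^{-\alpha_k}$ and $\zeta^\star(\alpha_1,\ldots,\alpha_k)=\sum_{1\le k_1\le\cdots\le k_k}k_1^{-\alpha_1}\cdots k_k^{-\alpha_k}$; $\{a\}^k$ denotes $k$ repetitions of $a$. *)

From Stdlib Require Import Reals List.
From Coquelicot Require Import Coquelicot.
Open Scope R_scope.

(* Finite sum of f k for k = a, a+1, ..., b (empty if b < a). *)
Definition sum_range (a b : nat) (f : nat -> R) : R :=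
  fold_right Rplus 0 (map f (seq a (S b - a))).

(* mzv_part s lo N = sum over lo < k_1 < ... < k_d <= N of prod k_i^{-s_i} *)
Fixpoint mzv_part (s : list nat) (lo N : nat) : R :=
  match s with
  | nil => 1
  | a :: s' => sum_range (S lo) N (fun k => / (INR k ^ a) * mzv_part s' k N)
  end.

(* mzsv_part s lo N = sum over lo <= k_1 <= ... <= k_d <= N of prod k_i^{-s_i} *)
Fixpoint mzsv_part (s : list nat) (lo N : nat) : R :=
  match s with
  | nil => 1
  | a :: s' => sum_range lo N (fun k => / (INR k ^ a) * mzsv_part s' k N)
  end.

Definition mzv (s : list nat) : R := real (Lim_seq (fun N => mzv_part s 0 N)).

Definition mzsv (s : list nat) : R := real (Lim_seq (fun N => mzsv_part s 1 N)).

From Stdlib Require Import Reals Lra Lia List FunctionalExtensionality.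
From Coquelicot Require Import Coquelicot.
Import ListNotations.
Open Scope R_scope.

(* For each N consider the formal power series
     A_N(x) = sum_{m=1}^N (1/m^2) prod_{j<m} (1 + x/j) / (1 + x/m),
     B_N(x) = prod_{j=1}^N 1 / (1 - x^2/j^2).
   The coefficient of x^n in A_N is the sum over r of (-1)^(r+n) zeta({1}^r, n+2-r) truncated
   at N, and B_N has coefficient zeta^*({2}^m) truncated at N at x^(2m) and none at odd powers.
   Multiplying the m-th term of A_N by prod_{i<m} 1 / (1 - x/(N-i)) gives a series Phi_N with
   x^2 Phi_N = B_N - 1 exactly: the recurrence
   Phi_(N+1) = (Phi_N + 1/(N+1)^2) / (1 - x^2/(N+1)^2) comes from summing over m a
   Wilf-Zeilberger relation between the m-th terms of Phi_(N+1) and Phi_N, whose rational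
   certificate is checked coefficientwise.  The extra factors change the coefficient of x^n by
   O(H_N^n / N), H_N the harmonic number, which tends to 0; letting N go to infinity compares
   the coefficients of A and (B - 1)/x^2.  The m-th term of A_N is [alt_term m],
   the extra factor is [corr_factor N m], and Phi_N, B_N are [wz_Phi N], [star_gen N]. *)

Lemma INR_succ_neq0 n : INR (S n) <> 0.
Proof. apply not_0_INR. discriminate. Qed.

Lemma Rinv_nonneg x : 0 <= x -> 0 <= / x.
Proof.
  intros Hx. destruct (Req_dec x 0) as [->|Hx0]; [rewrite Rinv_0; lra|].
  apply Rlt_le, Rinv_0_lt_compat. lra.
Qed.

Lemma inv_INR_nonneg j : 0 <= / INR j.
Proof. apply Rinv_nonneg, pos_INR. Qed.

Lemma inv_INR_pow_nonneg j k : 0 <= / INR j ^ k.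
Proof. apply Rinv_nonneg, pow_le, pos_INR. Qed.

Fixpoint sum_lt (k : nat) (f : nat -> R) : R :=
  match k with O => 0 | S k' => sum_lt k' f + f k' end.

Lemma sum_lt_ext k f g : (forall i, (i < k)%nat -> f i = g i) -> sum_lt k f = sum_lt k g.
Proof.
  induction k as [|k IH]; intros H; simpl; [reflexivity|].
  rewrite IH, H; auto.
Qed.

Lemma sum_lt_add k f g : sum_lt k (fun i => f i + g i) = sum_lt k f + sum_lt k g.
Proof. induction k as [|k IH]; simpl; [|rewrite IH]; ring. Qed.

Lemma sum_lt_scal k c f : sum_lt k (fun i => c * f i) = c * sum_lt k f.
Proof. induction k as [|k IH]; simpl; [|rewrite IH]; ring. Qed.

Lemma sum_lt_eq0 k f : (forall i, (i < k)%nat -> f i = 0) -> sum_lt k f = 0.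
Proof.
  induction k as [|k IH]; intros H; simpl; [reflexivity|].
  rewrite IH, H; auto; ring.
Qed.

Lemma sum_lt_succ_l k f : sum_lt (S k) f = f O + sum_lt k (fun i => f (S i)).
Proof. induction k as [|k IH]; simpl in *; [|rewrite IH]; ring. Qed.

Lemma sum_lt_le k f g : (forall i, (i < k)%nat -> f i <= g i) -> sum_lt k f <= sum_lt k g.
Proof.
  induction k as [|k IH]; intros H; simpl; [lra|].
  apply Rplus_le_compat; auto.
Qed.

Lemma sum_lt_nonneg k f : (forall i, 0 <= f i) -> 0 <= sum_lt k f.
Proof.
  intros H. rewrite <- (sum_lt_eq0 k (fun _ => 0)) by reflexivity.
  apply sum_lt_le; auto.
Qed.

Lemma sum_lt_le_len k k' f : (k <= k')%nat -> (forall i, 0 <= f i) -> sum_lt k f <= sum_lt k' f.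
Proof. intros Hk Hf. induction Hk; simpl; [lra|]. specialize (Hf m). lra. Qed.

Lemma sum_lt_abs k f : Rabs (sum_lt k f) <= sum_lt k (fun i => Rabs (f i)).
Proof.
  induction k as [|k IH]; simpl; [rewrite Rabs_R0; lra|].
  eapply Rle_trans; [apply Rabs_triang|]. lra.
Qed.

Lemma sum_lt_const k c : sum_lt k (fun _ => c) = INR k * c.
Proof. induction k as [|k IH]; simpl sum_lt; [simpl|rewrite IH, S_INR]; ring. Qed.

Lemma sum_lt_rev k f : sum_lt k (fun i => f (k - 1 - i)%nat) = sum_lt k f.
Proof.
  induction k as [|k IH]; [reflexivity|].
  rewrite sum_lt_succ_l. change (sum_lt (S k) f) with (sum_lt k f + f k).
  rewrite <- IH, Nat.sub_0_r, Rplus_comm. replace (S k - 1)%nat with k by lia. f_equal.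
  apply sum_lt_ext. intros i _. f_equal. lia.
Qed.

Lemma sum_lt_triangle n (a : nat -> nat -> R) :
  sum_lt (S n) (fun k => sum_lt (S k) (fun i => a i (k - i)%nat)) =
  sum_lt (S n) (fun i => sum_lt (S (n - i)) (fun j => a i j)).
Proof.
  induction n as [|n IH]; [reflexivity|].
  transitivity (sum_lt (S n) (fun i => sum_lt (S (n - i)) (fun j => a i j))
                + sum_lt (S (S n)) (fun i => a i (S n - i)%nat)).
  { rewrite <- IH. reflexivity. }
  change (sum_lt (S (S n)) (fun i => sum_lt (S (S n - i)) (fun j => a i j)))
    with (sum_lt (S n) (fun i => sum_lt (S (S n - i)) (fun j => a i j))
          + sum_lt (S (S n - S n)) (fun j => a (S n) j)).
  rewrite (sum_lt_ext (S n) (fun i => sum_lt (S (S n - i)) (fun j => a i j))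
             (fun i => sum_lt (S (n - i)) (fun j => a i j) + a i (S n - i)%nat)).
  2:{ intros i Hi. replace (S n - i)%nat with (S (n - i)) by lia. reflexivity. }
  change (sum_lt (S (S n)) (fun i => a i (S n - i)%nat))
    with (sum_lt (S n) (fun i => a i (S n - i)%nat) + a (S n) (S n - S n)%nat).
  rewrite sum_lt_add, Nat.sub_diag. simpl (sum_lt 1 _). ring.
Qed.

Lemma sum_range_sum_lt a b f : sum_range a b f = sum_lt (S b - a) (fun i => f (a + i)%nat).
Proof.
  unfold sum_range. generalize (S b - a)%nat as k. intros k. revert a.
  induction k as [|k IH]; intros a; [reflexivity|].
  cbn [seq map fold_right]. rewrite IH, sum_lt_succ_l, Nat.add_0_r. f_equal.
  apply sum_lt_ext. intros i _. f_equal. lia.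
Qed.

Lemma sum_range_0 n f : sum_range 0 n f = sum_lt (S n) f.
Proof. rewrite sum_range_sum_lt, Nat.sub_0_r. reflexivity. Qed.

Lemma sum_pow_le_pow_add a b k : 0 <= a -> 0 <= b ->
  sum_lt (S k) (fun i => a ^ i * b ^ (k - i)) <= (a + b) ^ k.
Proof.
  intros Ha Hb. induction k as [|k IH]; [simpl; lra|].
  change (sum_lt (S (S k)) ?f) with (sum_lt (S k) f + f (S k)).
  rewrite (sum_lt_ext (S k) _ (fun i => b * (a ^ i * b ^ (k - i))))
    by (intros i Hi; replace (S k - i)%nat with (S (k - i)) by lia; simpl; ring).
  rewrite sum_lt_scal, Nat.sub_diag, pow_O.
  assert (a ^ S k <= a * (a + b) ^ k) by (simpl; apply Rmult_le_compat_l, pow_incr; lra).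
  assert (b * sum_lt (S k) (fun i => a ^ i * b ^ (k - i)) <= b * (a + b) ^ k)
    by (apply Rmult_le_compat_l; assumption).
  change ((a + b) ^ S k) with ((a + b) * (a + b) ^ k). lra.
Qed.

(** * Formal power series *)

Definition ps := nat -> R.

Definition ps_C (a : R) : ps := fun n => match n with O => a | _ => 0 end.
Definition ps_X : ps := fun n => match n with 1%nat => 1 | _ => 0 end.
Definition ps_add (f g : ps) : ps := fun n => f n + g n.
Definition ps_opp (f : ps) : ps := fun n => - f n.
Definition ps_sub (f g : ps) : ps := fun n => f n - g n.
Definition ps_mul (f g : ps) : ps := fun n => sum_lt (S n) (fun i => f i * g (n - i)%nat).

Declare Scope ps_scope.
Delimit Scope ps_scope with ps.
Infix "+" := ps_add : ps_scope.
Infix "*" := ps_mul : ps_scope.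
Infix "-" := ps_sub : ps_scope.
Notation "- x" := (ps_opp x) : ps_scope.
Notation "0" := (ps_C 0) : ps_scope.
Notation "1" := (ps_C 1) : ps_scope.

Lemma ps_ext (f g : ps) : (forall n, f n = g n) -> f = g.
Proof. intros H. apply functional_extensionality, H. Qed.

Lemma ps_mul_comm f g : (f * g = g * f)%ps.
Proof.
  apply ps_ext; intro n. unfold ps_mul. rewrite <- sum_lt_rev.
  apply sum_lt_ext. intros i Hi.
  replace (S n - 1 - i)%nat with (n - i)%nat by lia.
  replace (n - (n - i))%nat with i by lia. ring.
Qed.

Lemma ps_mul_assoc f g h : (f * (g * h) = f * g * h)%ps.
Proof.
  apply ps_ext; intro n. unfold ps_mul.
  transitivity (sum_lt (S n) (fun k => sum_lt (S k)
                  (fun i => f i * g (k - i)%nat * h (n - i - (k - i))%nat))).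
  - pose proof (sum_lt_triangle n (fun i j => f i * g j * h (n - i - j)%nat)) as T.
    cbv beta in T. rewrite T. apply sum_lt_ext. intros i Hi.
    rewrite <- sum_lt_scal. apply sum_lt_ext. intros j Hj.
    ring.
  - apply sum_lt_ext. intros k Hk.
    rewrite Rmult_comm, <- sum_lt_scal. apply sum_lt_ext. intros i Hi.
    replace (n - i - (k - i))%nat with (n - k)%nat by lia. ring.
Qed.

Lemma ps_mul_1_l f : (1 * f = f)%ps.
Proof.
  apply ps_ext; intro n. unfold ps_mul.
  rewrite sum_lt_succ_l, sum_lt_eq0 by (intros; simpl; ring).
  simpl. rewrite Nat.sub_0_r. ring.
Qed.

Lemma ps_mul_add_l f g h : ((f + g) * h = f * h + g * h)%ps.
Proof.
  apply ps_ext; intro n. unfold ps_mul, ps_add.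
  rewrite <- sum_lt_add. apply sum_lt_ext. intros; ring.
Qed.

Lemma ps_ring : ring_theory (ps_C 0) (ps_C 1) ps_add ps_mul ps_sub ps_opp (@eq ps).
Proof.
  constructor; intros;
    try apply ps_mul_1_l; try apply ps_mul_comm; try apply ps_mul_assoc;
    try apply ps_mul_add_l;
    apply ps_ext; intros [|n]; unfold ps_add, ps_sub, ps_opp, ps_C; ring.
Qed.

Add Ring ps_ring : ps_ring.

Lemma ps_mul_C_l a f n : (ps_C a * f)%ps n = a * f n.
Proof.
  unfold ps_mul. rewrite sum_lt_succ_l, sum_lt_eq0 by (intros; simpl; ring).
  simpl. rewrite Nat.sub_0_r. ring.
Qed.

Lemma ps_mul_X_0 f : (ps_X * f)%ps O = 0.
Proof. unfold ps_mul. simpl. ring. Qed.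

Lemma ps_mul_X_S f n : (ps_X * f)%ps (S n) = f n.
Proof.
  unfold ps_mul. rewrite !sum_lt_succ_l, sum_lt_eq0 by (intros; simpl; ring).
  simpl. rewrite Nat.sub_0_r. ring.
Qed.

Lemma ps_C_add a b : ps_C (a + b) = (ps_C a + ps_C b)%ps.
Proof. apply ps_ext; intros [|n]; unfold ps_add, ps_C; ring. Qed.

Lemma ps_C_mul a b : ps_C (a * b) = (ps_C a * ps_C b)%ps.
Proof. apply ps_ext; intros n. rewrite ps_mul_C_l. destruct n; unfold ps_C; ring. Qed.

Lemma ps_C_opp a : ps_C (- a) = (- ps_C a)%ps.
Proof. apply ps_ext; intros [|n]; unfold ps_opp, ps_C; ring. Qed.

Lemma ps_C_inv a : a <> 0 -> (ps_C a * ps_C (/ a) = 1)%ps.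
Proof. intros Ha. rewrite <- ps_C_mul, Rinv_r by exact Ha. reflexivity. Qed.

Definition ps_unit (f : ps) : Prop := exists g, (f * g = 1)%ps.

Lemma ps_unit_mul f g : ps_unit f -> ps_unit g -> ps_unit (f * g)%ps.
Proof.
  intros [f' Hf] [g' Hg]. exists (f' * g')%ps.
  transitivity (f * f' * (g * g'))%ps; [ring|]. rewrite Hf, Hg. ring.
Qed.

Lemma ps_unit_C a : a <> 0 -> ps_unit (ps_C a).
Proof. intros Ha. exists (ps_C (/ a)). apply ps_C_inv, Ha. Qed.

Lemma ps_mul_cancel_r M f g : ps_unit M -> (f * M = g * M)%ps -> f = g.
Proof.
  intros [M' HM] H.
  transitivity (f * M * M')%ps; [rewrite <- ps_mul_assoc, HM; ring|].
  rewrite H, <- ps_mul_assoc, HM. ring.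
Qed.

Lemma ps_mul_XX_0 f : (ps_X * ps_X * f)%ps O = 0.
Proof. rewrite <- ps_mul_assoc, ps_mul_X_0. reflexivity. Qed.

Lemma ps_mul_XX_1 f : (ps_X * ps_X * f)%ps 1%nat = 0.
Proof. rewrite <- ps_mul_assoc, ps_mul_X_S, ps_mul_X_0. reflexivity. Qed.

Lemma ps_mul_XX_SS f n : (ps_X * ps_X * f)%ps (S (S n)) = f n.
Proof. rewrite <- ps_mul_assoc, !ps_mul_X_S. reflexivity. Qed.

Definition ps_poly (l : list R) : ps := fun n => nth n l 0.

Fixpoint poly_add (p q : list R) : list R :=
  match p, q with
  | [], _ => q
  | _, [] => p
  | a :: p', b :: q' => (a + b) :: poly_add p' q'
  end.

Fixpoint poly_mul (p q : list R) : list R :=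
  match p with
  | [] => []
  | a :: p' => poly_add (map (Rmult a) q) (0 :: poly_mul p' q)
  end.

Lemma ps_poly_nil : ps_poly [] = 0%ps.
Proof. apply ps_ext; intros [|n]; reflexivity. Qed.

Lemma ps_poly_cons a l : ps_poly (a :: l) = (ps_C a + ps_X * ps_poly l)%ps.
Proof.
  apply ps_ext; intros [|n]; unfold ps_add;
    [rewrite ps_mul_X_0 | rewrite ps_mul_X_S]; unfold ps_poly, ps_C; simpl; ring.
Qed.

Lemma ps_poly_single a : ps_poly [a] = ps_C a.
Proof. rewrite ps_poly_cons, ps_poly_nil. ring. Qed.

Lemma ps_poly_add p q : ps_poly (poly_add p q) = (ps_poly p + ps_poly q)%ps.
Proof.
  revert q; induction p as [|a p IH]; intros [|b q]; simpl;
    rewrite ?ps_poly_nil; try ring.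
  rewrite !ps_poly_cons, IH, ps_C_add. ring.
Qed.

Lemma ps_poly_scale a q : ps_poly (map (Rmult a) q) = (ps_C a * ps_poly q)%ps.
Proof.
  induction q as [|b q IH]; simpl.
  - rewrite ps_poly_nil, <- ps_C_mul, Rmult_0_r. reflexivity.
  - rewrite !ps_poly_cons, IH, ps_C_mul. ring.
Qed.

Lemma ps_poly_mul p q : ps_poly (poly_mul p q) = (ps_poly p * ps_poly q)%ps.
Proof.
  induction p as [|a p IH]; simpl.
  - rewrite ps_poly_nil. ring.
  - rewrite ps_poly_add, ps_poly_scale, !ps_poly_cons, IH. ring.
Qed.

(* An identity between products and sums of polynomial series is checked by collecting each
   side into a single coefficient list and comparing the coefficients with [field]. *)
Ltac ps_poly_reify :=
  rewrite <- ?ps_poly_single;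
  repeat rewrite <- ps_poly_mul;
  repeat rewrite <- ps_poly_add.

Ltac ps_poly_coeffs :=
  apply ps_ext; let n := fresh "n" in
  intro n; unfold ps_poly; simpl;
  repeat first [ reflexivity
               | destruct n as [|n]; [field; repeat split; assumption | simpl] ].

Definition ps_geom (c : R) : ps := fun k => c ^ k.
Definition ps_lin (c : R) : ps := ps_poly [1; c].

Lemma ps_lin_mul c f : (ps_lin c * f = f + ps_C c * (ps_X * f))%ps.
Proof. unfold ps_lin. rewrite !ps_poly_cons, ps_poly_nil. ring. Qed.

Lemma ps_lin_mul_0 c f : (ps_lin c * f)%ps O = f O.
Proof. rewrite ps_lin_mul. unfold ps_add. rewrite ps_mul_C_l, ps_mul_X_0. ring. Qed.

Lemma ps_lin_mul_S c f n : (ps_lin c * f)%ps (S n) = f (S n) + c * f n.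
Proof. rewrite ps_lin_mul. unfold ps_add. rewrite ps_mul_C_l, ps_mul_X_S. reflexivity. Qed.

Lemma ps_lin_geom c : (ps_lin (- c) * ps_geom c = 1)%ps.
Proof.
  apply ps_ext; intros [|n];
    [rewrite ps_lin_mul_0 | rewrite ps_lin_mul_S]; unfold ps_geom, ps_C; simpl; ring.
Qed.

Lemma ps_lin_geom_opp c : (ps_lin c * ps_geom (- c) = 1)%ps.
Proof. rewrite <- (Ropp_involutive c) at 1. apply ps_lin_geom. Qed.

Lemma ps_unit_lin c : ps_unit (ps_lin c).
Proof. exists (ps_geom (- c)). apply ps_lin_geom_opp. Qed.

Lemma ps_lin_opp_mul c : (ps_lin (- c) * ps_lin c = 1 - ps_C (c ^ 2) * ps_X * ps_X)%ps.
Proof.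
  unfold ps_lin. rewrite !ps_poly_cons, ps_poly_nil, ps_C_opp.
  replace (c ^ 2) with (c * c) by ring. rewrite ps_C_mul. ring.
Qed.

Fixpoint ps_prod (a k : nat) (F : nat -> ps) : ps :=
  match k with O => 1%ps | S k' => (F a * ps_prod (S a) k' F)%ps end.

Lemma ps_prod_succ_r a k F : ps_prod a (S k) F = (ps_prod a k F * F (a + k)%nat)%ps.
Proof.
  revert a; induction k as [|k IH]; intros a.
  - simpl. rewrite Nat.add_0_r. ring.
  - change (ps_prod a (S (S k)) F) with (F a * ps_prod (S a) (S k) F)%ps.
    rewrite IH. simpl. rewrite Nat.add_succ_r. ring.
Qed.

Fixpoint ps_sum (k : nat) (F : nat -> ps) : ps :=
  match k with O => 0%ps | S k' => (ps_sum k' F + F k')%ps end.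

Lemma ps_sum_succ_l k F : ps_sum (S k) F = (F O + ps_sum k (fun i => F (S i)))%ps.
Proof. induction k as [|k IH]; simpl in *; [|rewrite IH]; ring. Qed.

Lemma ps_sum_ext k F G : (forall i, (i < k)%nat -> F i = G i) -> ps_sum k F = ps_sum k G.
Proof. induction k as [|k IH]; intros H; simpl; [|rewrite IH, H]; auto. Qed.

Lemma ps_sum_add k F G : ps_sum k (fun i => F i + G i)%ps = (ps_sum k F + ps_sum k G)%ps.
Proof. induction k as [|k IH]; simpl; [|rewrite IH]; ring. Qed.

Lemma ps_sum_mul_l k f F : ps_sum k (fun i => f * F i)%ps = (f * ps_sum k F)%ps.
Proof. induction k as [|k IH]; simpl; [|rewrite IH]; ring. Qed.

Lemma ps_sum_telescope k G : ps_sum k (fun i => G (S i) - G i)%ps = (G k - G O)%ps.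
Proof. induction k as [|k IH]; simpl; [|rewrite IH]; ring. Qed.

Lemma ps_sum_coef k F n : ps_sum k F n = sum_lt k (fun i => F i n).
Proof. induction k as [|k IH]; simpl; [destruct n|rewrite <- IH]; reflexivity. Qed.

Lemma ps_prod_coef_0 a k F : (forall i, F i O = 1) -> ps_prod a k F O = 1.
Proof.
  revert a; induction k as [|k IH]; intros a H; [reflexivity|].
  cbn [ps_prod]. unfold ps_mul. simpl. rewrite H, IH by exact H. ring.
Qed.

Definition ps_dominated (f : ps) (a : R) : Prop := forall k, Rabs (f k) <= a ^ k.

Lemma ps_dominated_mul f g a b : 0 <= a -> 0 <= b ->
  ps_dominated f a -> ps_dominated g b -> ps_dominated (f * g)%ps (a + b).
Proof.
  intros Ha Hb Hf Hg k. unfold ps_mul. eapply Rle_trans; [apply sum_lt_abs|].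
  eapply Rle_trans; [|apply (sum_pow_le_pow_add a b k Ha Hb)].
  apply sum_lt_le. intros i Hi. rewrite Rabs_mult.
  apply Rmult_le_compat; auto using Rabs_pos.
Qed.

Lemma ps_dominated_le f a a' : 0 <= a <= a' -> ps_dominated f a -> ps_dominated f a'.
Proof. intros Ha H k. eapply Rle_trans; [apply H|]. apply pow_incr. lra. Qed.

Lemma ps_dominated_lin c : ps_dominated (ps_lin c) (Rabs c).
Proof.
  intros [|[|k]]; unfold ps_lin, ps_poly; cbn [nth].
  - rewrite Rabs_R1. simpl. lra.
  - rewrite pow_1. lra.
  - destruct k; rewrite Rabs_R0; apply pow_le, Rabs_pos.
Qed.

Lemma ps_dominated_geom c : ps_dominated (ps_geom c) (Rabs c).
Proof. intros k. unfold ps_geom. rewrite RPow_abs. lra. Qed.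

Lemma ps_dominated_prod a k F b : (forall i, 0 <= b i) ->
  (forall i, (i < k)%nat -> ps_dominated (F (a + i)%nat) (b (a + i)%nat)) ->
  ps_dominated (ps_prod a k F) (sum_lt k (fun i => b (a + i)%nat)).
Proof.
  revert a; induction k as [|k IH]; intros a Hb HF.
  - intros [|j]; unfold ps_C; simpl; rewrite ?Rabs_R1, ?Rabs_R0; lra.
  - cbn [ps_prod]. rewrite sum_lt_succ_l, Nat.add_0_r.
    apply ps_dominated_mul.
    + apply Hb.
    + apply sum_lt_nonneg. intros; apply Hb.
    + specialize (HF O). rewrite Nat.add_0_r in HF. apply HF. lia.
    + rewrite (sum_lt_ext k _ (fun i => b (S a + i)%nat)) by (intros; f_equal; lia).
      apply IH; [exact Hb|]. intros i Hi.
      replace (S a + i)%nat with (a + S i)%nat by lia. apply HF. lia.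
Qed.

Lemma ps_mul_coef_bound f g H s n : 0 <= s <= H ->
  ps_dominated f H -> ps_dominated g s -> g O = 0 ->
  Rabs ((f * g)%ps n) <= INR n * (s * H ^ (n - 1)).
Proof.
  intros Hs Hf Hg Hg0. unfold ps_mul.
  change (sum_lt (S n) ?F) with (sum_lt n F + F n). cbv beta.
  rewrite Nat.sub_diag, Hg0, Rmult_0_r, Rplus_0_r, <- sum_lt_const.
  eapply Rle_trans; [apply sum_lt_abs|]. apply sum_lt_le. intros p Hp.
  rewrite Rabs_mult. apply (Rle_trans _ (H ^ p * (s * H ^ (n - p - 1)))).
  - apply Rmult_le_compat; [apply Rabs_pos|apply Rabs_pos|apply Hf|].
    assert (Hnp : (n - p)%nat = S (n - p - 1)) by lia. rewrite Hnp at 1.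
    eapply Rle_trans; [apply Hg|]. change (s ^ S (n - p - 1)) with (s * s ^ (n - p - 1)).
    apply Rmult_le_compat_l; [lra|]. apply pow_incr. lra.
  - replace (n - 1)%nat with (p + (n - p - 1))%nat by lia. rewrite pow_add. right. ring.
Qed.

(** * A Wilf-Zeilberger pair *)

Definition quad_inv (j : nat) : ps := (ps_geom (/ INR j) * ps_geom (- / INR j))%ps.

Definition star_gen (N : nat) : ps := ps_prod 1 N quad_inv.

Definition alt_term (m : nat) : ps :=
  (ps_C (/ INR m ^ 2) * ps_prod 1 (m - 1) (fun j => ps_lin (/ INR j))
   * ps_geom (- / INR m))%ps.

Definition corr_factor (N m : nat) : ps := ps_prod 0 m (fun i => ps_geom (/ INR (N - i))).

Definition wz_F (N m : nat) : ps := (alt_term m * corr_factor N m)%ps.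

Definition wz_Phi (N : nat) : ps := ps_sum N (fun i => wz_F N (S i)).

Definition wz_R (n a : R) : ps :=
  ps_mul (ps_mul (ps_C (a / ((n + 1) ^ 2 * (n + 1 - a)))) (ps_poly [a; 1]))
         (ps_poly [a - n - 1; 1]).

Definition wz_G (N m : nat) : ps := (wz_R (INR N) (INR m) * wz_F N m)%ps.

Lemma quad_inv_lin j : (quad_inv j * ps_lin (- / INR j) * ps_lin (/ INR j) = 1)%ps.
Proof.
  unfold quad_inv.
  transitivity (ps_lin (- / INR j) * ps_geom (/ INR j)
                * (ps_lin (/ INR j) * ps_geom (- / INR j)))%ps;
    [ring|].
  rewrite ps_lin_geom, ps_lin_geom_opp. ring.
Qed.

Lemma alt_term_succ m : (1 <= m)%nat ->
  (alt_term (S m) * ps_lin (/ INR (S m)) * ps_C (INR (S m) ^ 2) =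
   alt_term m * ps_lin (/ INR m) * ps_lin (/ INR m) * ps_C (INR m ^ 2))%ps.
Proof.
  intros Hm. unfold alt_term.
  replace (S m - 1)%nat with (S (m - 1)) by lia.
  rewrite ps_prod_succ_r. replace (1 + (m - 1))%nat with m by lia.
  set (P := ps_prod 1 (m - 1) _).
  transitivity (P * ps_lin (/ INR m) * (ps_C (INR (S m) ^ 2) * ps_C (/ INR (S m) ^ 2))
                * (ps_lin (/ INR (S m)) * ps_geom (- / INR (S m))))%ps; [ring|].
  symmetry.
  transitivity (P * ps_lin (/ INR m) * (ps_C (INR m ^ 2) * ps_C (/ INR m ^ 2))
                * (ps_lin (/ INR m) * ps_geom (- / INR m)))%ps; [ring|].
  rewrite !ps_lin_geom_opp, !ps_C_inv; [ring| |];
    apply pow_nonzero, not_0_INR; lia.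
Qed.

Lemma corr_factor_succ_r N m :
  (corr_factor N (S m) * ps_lin (- / INR (N - m)) = corr_factor N m)%ps.
Proof.
  unfold corr_factor. rewrite ps_prod_succ_r. simpl (0 + m)%nat.
  rewrite <- ps_mul_assoc, (ps_mul_comm (ps_geom _)), ps_lin_geom. ring.
Qed.

Lemma corr_factor_succ N m :
  (corr_factor (S N) (S m) * ps_lin (- / INR (S N)) = corr_factor N m)%ps.
Proof.
  unfold corr_factor. cbn [ps_prod]. rewrite Nat.sub_0_r.
  transitivity (ps_lin (- / INR (S N)) * ps_geom (/ INR (S N))
                * ps_prod 1 m (fun i => ps_geom (/ INR (S N - i))))%ps; [ring|].
  rewrite ps_lin_geom, ps_mul_1_l.
  clear. generalize 0%nat as a. induction m as [|m IH]; intros a; [reflexivity|].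
  cbn [ps_prod]. rewrite IH. reflexivity.
Qed.

Lemma quad_inv_mul j : (quad_inv j * (1 - ps_C (/ INR j ^ 2) * ps_X * ps_X) = 1)%ps.
Proof.
  rewrite <- pow_inv, <- ps_lin_opp_mul, ps_mul_assoc. apply quad_inv_lin.
Qed.

Lemma wz_F_succ_N N m : (1 <= m)%nat ->
  (wz_F (S N) m * ps_lin (- / INR (S N)) = wz_F N m * ps_lin (- / INR (S N - m)))%ps.
Proof.
  intros Hm. destruct m as [|m]; [lia|]. unfold wz_F.
  rewrite <- ps_mul_assoc, corr_factor_succ, <- ps_mul_assoc.
  replace (S N - S m)%nat with (N - m)%nat by lia.
  rewrite corr_factor_succ_r. reflexivity.
Qed.

Lemma wz_F_succ_m N m : (1 <= m)%nat ->
  (wz_F N (S m) * ps_lin (/ INR (S m)) * ps_lin (- / INR (N - m)) * ps_C (INR (S m) ^ 2) =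
   wz_F N m * ps_lin (/ INR m) * ps_lin (/ INR m) * ps_C (INR m ^ 2))%ps.
Proof.
  intros Hm. unfold wz_F.
  transitivity (alt_term (S m) * ps_lin (/ INR (S m)) * ps_C (INR (S m) ^ 2)
                * (corr_factor N (S m) * ps_lin (- / INR (N - m))))%ps; [ring|].
  rewrite alt_term_succ, corr_factor_succ_r by exact Hm. ring.
Qed.

Lemma wz_F_diag N : (1 <= N)%nat ->
  (wz_F (S N) (S N) * ps_lin (- / INR (S N)) * ps_lin (/ INR (S N)) * ps_C (INR (S N) ^ 2) =
   wz_F N N * ps_lin (/ INR N) * ps_lin (/ INR N) * ps_C (INR N ^ 2))%ps.
Proof.
  intros HN. unfold wz_F.
  transitivity (alt_term (S N) * ps_lin (/ INR (S N)) * ps_C (INR (S N) ^ 2)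
                * (corr_factor (S N) (S N) * ps_lin (- / INR (S N))))%ps; [ring|].
  rewrite alt_term_succ, corr_factor_succ by exact HN. ring.
Qed.

Lemma wz_certificate_interior (n a : R) :
  n + 1 <> 0 -> n - a <> 0 -> n + 1 - a <> 0 -> a <> 0 -> a + 1 <> 0 ->
  let Q := (ps_lin (/ (a + 1)) * ps_lin (- / (n - a)) * ps_C ((a + 1) ^ 2))%ps in
  (ps_lin (- / (n + 1 - a)) * ps_lin (/ (n + 1)) * Q + wz_R n a * Q =
   Q + wz_R n (a + 1) * (ps_lin (/ a) * ps_lin (/ a) * ps_C (a ^ 2)))%ps.
Proof.
  intros Hn Hna Hna1 Ha Ha1 Q. subst Q.
  assert (n + 1 - (a + 1) <> 0) by (intro; apply Hna; lra).
  unfold wz_R, ps_lin. ps_poly_reify. ps_poly_coeffs.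
Qed.

Lemma wz_certificate_boundary (n : R) : n <> 0 -> n + 1 <> 0 ->
  (ps_lin (/ n) * ps_lin (/ n) * ps_C (n ^ 2)
   + ps_lin (- / (n + 1 - n)) * ps_lin (/ (n + 1)) * ps_C ((n + 1) ^ 2)
   + wz_R n n * ps_C ((n + 1) ^ 2) = ps_C ((n + 1) ^ 2))%ps.
Proof.
  intros Hn Hn1.
  assert (n + 1 - n <> 0) by (intro; lra).
  unfold wz_R, ps_lin. ps_poly_reify. ps_poly_coeffs.
Qed.

Lemma wz_interior N m : (1 <= m)%nat -> (m < N)%nat ->
  wz_F (S N) m = (quad_inv (S N) * (wz_F N m + (wz_G N (S m) - wz_G N m)))%ps.
Proof.
  intros Hm HmN.
  set (Q := (ps_lin (/ INR (S m)) * ps_lin (- / INR (N - m)) * ps_C (INR (S m) ^ 2))%ps).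
  apply (ps_mul_cancel_r (ps_lin (- / INR (S N)) * ps_lin (/ INR (S N)) * Q)%ps).
  { unfold Q. repeat apply ps_unit_mul; try apply ps_unit_lin.
    apply ps_unit_C, pow_nonzero, INR_succ_neq0. }
  transitivity (wz_F (S N) m * ps_lin (- / INR (S N)) * (ps_lin (/ INR (S N)) * Q))%ps;
    [ring|].
  rewrite wz_F_succ_N by exact Hm. symmetry.
  transitivity (quad_inv (S N) * ps_lin (- / INR (S N)) * ps_lin (/ INR (S N))
    * (wz_F N m * Q - wz_R (INR N) (INR m) * wz_F N m * Q
       + wz_R (INR N) (INR (S m)) * (wz_F N (S m) * ps_lin (/ INR (S m))
                                      * ps_lin (- / INR (N - m)) * ps_C (INR (S m) ^ 2))))%ps;
    [unfold wz_G, Q; ring|].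
  rewrite quad_inv_lin, wz_F_succ_m by exact Hm.
  unfold Q. rewrite !minus_INR, !S_INR by lia.
  assert (Hm1 : 1 <= INR m) by (apply (le_INR 1); exact Hm).
  assert (HmN1 : INR m + 1 <= INR N) by (rewrite <- S_INR; apply le_INR; exact HmN).
  pose proof (wz_certificate_interior (INR N) (INR m)) as cert; cbv zeta in cert.
  specialize (cert ltac:(lra) ltac:(lra) ltac:(lra) ltac:(lra) ltac:(lra)).
  set (Q' := (ps_lin (/ (INR m + 1)) * ps_lin (- / (INR N - INR m))
              * ps_C ((INR m + 1) ^ 2))%ps) in *.
  set (R0 := wz_R (INR N) (INR m)) in *.
  symmetry.
  transitivity (wz_F N m * (ps_lin (- / (INR N + 1 - INR m)) * ps_lin (/ (INR N + 1)) * Q'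
                            + R0 * Q') - R0 * wz_F N m * Q')%ps; [ring|].
  rewrite cert. ring.
Qed.

Lemma wz_boundary N : (1 <= N)%nat ->
  (wz_F (S N) (S N) + wz_F (S N) N = quad_inv (S N) * (wz_F N N - wz_G N N))%ps.
Proof.
  intros HN.
  set (P := ps_C (INR (S N) ^ 2)).
  apply (ps_mul_cancel_r (ps_lin (- / INR (S N)) * ps_lin (/ INR (S N)) * P)%ps).
  { unfold P. repeat apply ps_unit_mul; try apply ps_unit_lin.
    apply ps_unit_C, pow_nonzero, INR_succ_neq0. }
  transitivity (wz_F (S N) (S N) * ps_lin (- / INR (S N)) * ps_lin (/ INR (S N)) * P
                + wz_F (S N) N * ps_lin (- / INR (S N)) * (ps_lin (/ INR (S N)) * P))%ps;
    [ring|].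
  rewrite wz_F_diag, wz_F_succ_N by exact HN.
  transitivity (quad_inv (S N) * ps_lin (- / INR (S N)) * ps_lin (/ INR (S N))
                * (wz_F N N * P - wz_R (INR N) (INR N) * wz_F N N * P))%ps;
    [|unfold wz_G; ring].
  rewrite quad_inv_lin.
  unfold P. rewrite !minus_INR, !S_INR by lia.
  assert (Hn : 1 <= INR N) by (apply (le_INR 1); exact HN).
  pose proof (wz_certificate_boundary (INR N) ltac:(lra) ltac:(lra)) as cert.
  set (R0 := wz_R (INR N) (INR N)) in *.
  transitivity (wz_F N N * (ps_lin (/ INR N) * ps_lin (/ INR N) * ps_C (INR N ^ 2)
      + ps_lin (- / (INR N + 1 - INR N)) * ps_lin (/ (INR N + 1)) * ps_C ((INR N + 1) ^ 2)
      + R0 * ps_C ((INR N + 1) ^ 2)) - R0 * wz_F N N * ps_C ((INR N + 1) ^ 2))%ps; [ring|].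
  rewrite cert. ring.
Qed.

Lemma wz_G_1 N : (1 <= N)%nat -> wz_G N 1 = (- ps_C (/ INR (S N) ^ 2))%ps.
Proof.
  intros HN.
  assert (Hn : INR N <> 0) by (apply not_0_INR; lia).
  unfold wz_G, wz_F, wz_R, alt_term, corr_factor.
  simpl (1 - 1)%nat. cbn [ps_prod]. rewrite Nat.sub_0_r.
  change (INR 1) with 1. rewrite pow1, Rinv_1.
  replace (ps_poly [1 - INR N - 1; 1]) with (ps_C (- INR N) * ps_lin (- / INR N))%ps.
  2:{ unfold ps_lin. rewrite <- ps_poly_single, <- ps_poly_mul. simpl.
      f_equal. f_equal; [ring|]. f_equal; field; exact Hn. }
  transitivity (ps_C (1 / ((INR N + 1) ^ 2 * (INR N + 1 - 1))) * ps_C (- INR N)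
                * (ps_lin 1 * ps_geom (- (1))) * (ps_lin (- / INR N) * ps_geom (/ INR N)))%ps.
  { unfold ps_lin. ring. }
  rewrite ps_lin_geom_opp, ps_lin_geom, <- ps_C_mul, <- ps_C_opp, S_INR.
  replace (1 / ((INR N + 1) ^ 2 * (INR N + 1 - 1)) * - INR N) with (- / (INR N + 1) ^ 2).
  - ring.
  - pose proof (pos_INR N). field. split; lra.
Qed.

Lemma wz_Phi_succ N :
  wz_Phi (S N) = (quad_inv (S N) * (wz_Phi N + ps_C (/ INR (S N) ^ 2)))%ps.
Proof.
  destruct N as [|N].
  - unfold wz_Phi, wz_F, alt_term, corr_factor, quad_inv. cbn [ps_sum ps_prod Nat.sub].
    change (INR 1) with 1. rewrite pow1, !Rinv_1. ring.
  - unfold wz_Phi. cbn [ps_sum].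
    rewrite (ps_sum_ext N _ (fun i => quad_inv (S (S N)) * (wz_F (S N) (S i)
               + (wz_G (S N) (S (S i)) - wz_G (S N) (S i))))%ps)
      by (intros i Hi; apply wz_interior; lia).
    rewrite ps_sum_mul_l, ps_sum_add, (ps_sum_telescope N (fun i => wz_G (S N) (S i))).
    rewrite wz_G_1 by lia.
    transitivity (quad_inv (S (S N)) * (ps_sum N (fun i => wz_F (S N) (S i)) + wz_G (S N) (S N)
                                        + ps_C (/ INR (S (S N)) ^ 2))
                  + (wz_F (S (S N)) (S (S N)) + wz_F (S (S N)) (S N)))%ps; [ring|].
    rewrite wz_boundary by lia. ring.
Qed.

Lemma wz_Phi_closed_form N : (ps_X * ps_X * wz_Phi N = star_gen N - 1)%ps.
Proof.
  induction N as [|N IH].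
  - unfold wz_Phi, star_gen. simpl. ring.
  - rewrite wz_Phi_succ. unfold star_gen. rewrite ps_prod_succ_r. fold (star_gen N).
    simpl (1 + N)%nat.
    transitivity (quad_inv (S N)
                  * (ps_X * ps_X * wz_Phi N + ps_C (/ INR (S N) ^ 2) * ps_X * ps_X))%ps;
      [ring|].
    rewrite IH.
    transitivity (star_gen N * quad_inv (S N)
                  - quad_inv (S N) * (1 - ps_C (/ INR (S N) ^ 2) * ps_X * ps_X))%ps; [ring|].
    rewrite quad_inv_mul. reflexivity.
Qed.

(** * Truncated multiple zeta values as coefficients *)

Lemma mzv_part_split a s lo N : (lo < N)%nat ->
  mzv_part (a :: s) lo N = / INR (S lo) ^ a * mzv_part s (S lo) N + mzv_part (a :: s) (S lo) N.
Proof.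
  intros H. cbn [mzv_part]. rewrite !sum_range_sum_lt.
  replace (S N - S lo)%nat with (S (N - S lo)) by lia.
  replace (S N - S (S lo))%nat with (N - S lo)%nat by lia.
  rewrite sum_lt_succ_l, Nat.add_0_r. f_equal.
  apply sum_lt_ext. intros i _. rewrite Nat.add_succ_r. reflexivity.
Qed.

Lemma mzv_part_top a s N : mzv_part (a :: s) N N = 0.
Proof. cbn [mzv_part]. rewrite sum_range_sum_lt, Nat.sub_diag. reflexivity. Qed.

Lemma mzsv_part_split a s lo N : (lo <= N)%nat ->
  mzsv_part (a :: s) lo N = / INR lo ^ a * mzsv_part s lo N + mzsv_part (a :: s) (S lo) N.
Proof.
  intros H. cbn [mzsv_part]. rewrite !sum_range_sum_lt.
  replace (S N - lo)%nat with (S (N - lo)) by lia.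
  replace (S N - S lo)%nat with (N - lo)%nat by lia.
  rewrite sum_lt_succ_l, Nat.add_0_r. f_equal.
  apply sum_lt_ext. intros i _. rewrite Nat.add_succ_r. reflexivity.
Qed.

Lemma mzsv_part_top a s N : mzsv_part (a :: s) (S N) N = 0.
Proof. cbn [mzsv_part]. rewrite sum_range_sum_lt, Nat.sub_diag. reflexivity. Qed.

Definition alt_mzv_term (N lo n r : nat) : R :=
  (-1) ^ (r + n) * mzv_part (repeat 1%nat r ++ [(n + 2 - r)%nat]) lo N.

Definition alt_mzv_part (N lo n : nat) : R := sum_range 0 n (alt_mzv_term N lo n).

Lemma alt_mzv_term_0 N lo n : (lo < N)%nat ->
  alt_mzv_term N lo n 0 = / INR (S lo) ^ 2 * (- / INR (S lo)) ^ n + alt_mzv_term N (S lo) n 0.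
Proof.
  intros Hlo. unfold alt_mzv_term. cbn [repeat app]. rewrite mzv_part_split by exact Hlo.
  rewrite Nat.sub_0_r, Nat.add_0_l, <- !pow_inv, (pow_add (/ INR (S lo)) n 2).
  replace (- / INR (S lo)) with (-1 * / INR (S lo)) by ring.
  rewrite Rpow_mult_distr. change (mzv_part [] (S lo) N) with 1. ring.
Qed.

Lemma alt_mzv_term_S N lo n r : (lo < N)%nat ->
  alt_mzv_term N lo (S n) (S r) =
  alt_mzv_term N (S lo) (S n) (S r) + / INR (S lo) * alt_mzv_term N (S lo) n r.
Proof.
  intros Hlo. unfold alt_mzv_term. cbn [repeat app]. rewrite mzv_part_split by exact Hlo.
  replace (S n + 2 - S r)%nat with (n + 2 - r)%nat by lia.
  replace (S r + S n)%nat with (S (S (r + n))) by lia.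
  rewrite pow_1. change ((-1) ^ S (S (r + n))) with (-1 * (-1 * (-1) ^ (r + n))). ring.
Qed.

Lemma alt_mzv_part_step N lo n : (lo < N)%nat ->
  alt_mzv_part N lo n =
  / INR (S lo) ^ 2 * (- / INR (S lo)) ^ n + alt_mzv_part N (S lo) n
  + match n with O => 0 | S n' => / INR (S lo) * alt_mzv_part N (S lo) n' end.
Proof.
  intros Hlo. unfold alt_mzv_part. rewrite !sum_range_0.
  destruct n as [|n].
  - simpl sum_lt. rewrite alt_mzv_term_0 by exact Hlo. ring.
  - rewrite sum_range_0, !(sum_lt_succ_l (S n)), alt_mzv_term_0 by exact Hlo.
    rewrite (sum_lt_ext (S n) (fun i => alt_mzv_term N lo (S n) (S i))
               (fun i => alt_mzv_term N (S lo) (S n) (S i)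
                         + / INR (S lo) * alt_mzv_term N (S lo) n i))
      by (intros i _; apply alt_mzv_term_S, Hlo).
    rewrite sum_lt_add, sum_lt_scal. ring.
Qed.

Fixpoint alt_tail (lo k : nat) : ps :=
  match k with
  | O => 0%ps
  | S k' => (ps_C (/ INR (S lo) ^ 2) * ps_geom (- / INR (S lo))
             + ps_lin (/ INR (S lo)) * alt_tail (S lo) k')%ps
  end.

Lemma alt_tail_sum lo k :
  alt_tail lo k =
  ps_sum k (fun i => ps_C (/ INR (S lo + i) ^ 2) * ps_prod (S lo) i (fun j => ps_lin (/ INR j))
                     * ps_geom (- / INR (S lo + i)))%ps.
Proof.
  revert lo; induction k as [|k IH]; intros lo; [reflexivity|].
  cbn [alt_tail]. rewrite IH, ps_sum_succ_l, Nat.add_0_r, <- ps_sum_mul_l.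
  cbn [ps_prod]. f_equal; [ring|].
  apply ps_sum_ext. intros i _. replace (S lo + S i)%nat with (S (S lo) + i)%nat by lia. ring.
Qed.

Lemma alt_tail_0 N : alt_tail 0 N = ps_sum N (fun i => alt_term (S i)).
Proof.
  rewrite alt_tail_sum. apply ps_sum_ext. intros i _.
  unfold alt_term. simpl (S i - 1)%nat. rewrite Nat.sub_0_r. reflexivity.
Qed.

Lemma alt_tail_coef N lo k n : (lo + k = N)%nat -> alt_tail lo k n = alt_mzv_part N lo n.
Proof.
  revert lo n; induction k as [|k IH]; intros lo n Hk.
  - rewrite Nat.add_0_r in Hk. subst lo. unfold alt_mzv_part. rewrite sum_range_0.
    rewrite sum_lt_eq0; [destruct n; reflexivity|].
    intros [|i] _; unfold alt_mzv_term; cbn [repeat app]; rewrite mzv_part_top; ring.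
  - cbn [alt_tail]. unfold ps_add at 1. rewrite ps_mul_C_l, alt_mzv_part_step by lia.
    destruct n as [|n];
      [rewrite ps_lin_mul_0, IH by lia | rewrite ps_lin_mul_S, !IH by lia];
      unfold ps_geom; ring.
Qed.

Definition star_series (N lo : nat) : ps := fun n =>
  if Nat.even n then mzsv_part (repeat 2%nat (Nat.div2 n)) lo N else 0.

Lemma star_series_step N lo : (1 <= lo <= N)%nat ->
  ((1 - ps_C (/ INR lo ^ 2) * ps_X * ps_X) * star_series N lo = star_series N (S lo))%ps.
Proof.
  intros Hlo. apply ps_ext; intro n.
  replace ((1 - ps_C (/ INR lo ^ 2) * ps_X * ps_X) * star_series N lo)%ps
    with (star_series N lo - ps_X * ps_X * (ps_C (/ INR lo ^ 2) * star_series N lo))%ps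
    by ring.
  unfold ps_sub at 1.
  destruct n as [|[|n]].
  - rewrite ps_mul_XX_0. unfold star_series. simpl. ring.
  - rewrite ps_mul_XX_1. unfold star_series. simpl. ring.
  - rewrite ps_mul_XX_SS, ps_mul_C_l. unfold star_series.
    rewrite !Nat.even_succ_succ. change (Nat.div2 (S (S n))) with (S (Nat.div2 n)).
    destruct (Nat.even n); [|ring].
    cbn [repeat]. rewrite mzsv_part_split by lia. ring.
Qed.

Lemma star_series_top N : star_series N (S N) = 1%ps.
Proof.
  apply ps_ext; intros [|[|n]]; unfold star_series, ps_C; [reflexivity|reflexivity|].
  rewrite Nat.even_succ_succ. change (Nat.div2 (S (S n))) with (S (Nat.div2 n)).
  destruct (Nat.even n); [apply mzsv_part_top|reflexivity].
Qed.

Lemma star_prod_series N lo k : (1 <= lo)%nat -> (lo + k = S N)%nat ->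
  ps_prod lo k quad_inv = star_series N lo.
Proof.
  revert lo; induction k as [|k IH]; intros lo H1 H2.
  - rewrite Nat.add_0_r in H2. subst lo. symmetry. apply star_series_top.
  - cbn [ps_prod]. rewrite IH, <- (star_series_step N lo) by lia.
    rewrite ps_mul_assoc, quad_inv_mul. ring.
Qed.

Lemma star_gen_series N : star_gen N = star_series N 1.
Proof. apply star_prod_series; lia. Qed.

Definition wz_err (N : nat) : ps :=
  ps_sum N (fun i => alt_term (S i) * (corr_factor N (S i) - 1))%ps.

Lemma star_series_coef N n :
  star_series N 1 (n + 2)%nat = alt_mzv_part N 0 n + wz_err N n.
Proof.
  replace (n + 2)%nat with (S (S n)) by lia.
  rewrite <- star_gen_series.
  replace (star_gen N (S (S n))) with ((star_gen N - 1)%ps (S (S n)))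
    by (unfold ps_sub, ps_C; ring).
  rewrite <- wz_Phi_closed_form, ps_mul_XX_SS, <- (alt_tail_coef N 0 N) by lia.
  rewrite alt_tail_0. unfold wz_Phi, wz_err.
  rewrite (ps_sum_ext N _ (fun i => alt_term (S i)
                                    + alt_term (S i) * (corr_factor N (S i) - 1))%ps)
    by (intros i _; unfold wz_F; ring).
  rewrite ps_sum_add. reflexivity.
Qed.

(** * The error term *)

Definition harmonic (N : nat) : R := sum_lt N (fun i => / INR (S i)).

Definition harmonic_tail (N m : nat) : R := sum_lt m (fun i => / INR (N - i)).

Lemma harmonic_nonneg N : 0 <= harmonic N.
Proof. apply sum_lt_nonneg. intros; apply inv_INR_nonneg. Qed.

Lemma harmonic_le m N : (m <= N)%nat -> harmonic m <= harmonic N.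
Proof. intros H. apply sum_lt_le_len; [exact H|]. intros; apply inv_INR_nonneg. Qed.

Lemma harmonic_pos N : (1 <= N)%nat -> 0 < harmonic N.
Proof.
  intros HN. apply (Rlt_le_trans _ (harmonic 1)); [|apply harmonic_le, HN].
  unfold harmonic. simpl. rewrite Rinv_1. lra.
Qed.

Lemma harmonic_tail_nonneg N m : 0 <= harmonic_tail N m.
Proof. apply sum_lt_nonneg. intros; apply inv_INR_nonneg. Qed.

Lemma harmonic_tail_full N : harmonic_tail N N = harmonic N.
Proof.
  unfold harmonic_tail, harmonic. rewrite <- (sum_lt_rev N (fun i => / INR (S i))).
  apply sum_lt_ext. intros i Hi. do 2 f_equal. lia.
Qed.

Lemma harmonic_tail_le N m : (m <= N)%nat -> harmonic_tail N m <= harmonic N.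
Proof.
  intros H. rewrite <- harmonic_tail_full. apply sum_lt_le_len; [exact H|].
  intros; apply inv_INR_nonneg.
Qed.

Lemma harmonic_tail_bound N m : (m <= N)%nat -> harmonic_tail N m <= INR m * / INR (S N - m).
Proof.
  intros Hm. unfold harmonic_tail. rewrite <- sum_lt_const. apply sum_lt_le. intros j Hj.
  apply Rinv_le_contravar; [apply lt_0_INR; lia|apply le_INR; lia].
Qed.

Lemma corr_factor_dominated N m : ps_dominated (corr_factor N m) (harmonic_tail N m).
Proof.
  apply (ps_dominated_prod 0 m _ (fun i => / INR (N - i))); [intros; apply inv_INR_nonneg|].
  intros i _. simpl. eapply ps_dominated_le; [|apply ps_dominated_geom].
  rewrite Rabs_right by apply Rle_ge, inv_INR_nonneg. split; [apply inv_INR_nonneg|lra].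
Qed.

Lemma corr_factor_coef_0 N m : corr_factor N m O = 1.
Proof. apply ps_prod_coef_0. reflexivity. Qed.

Lemma corr_factor_sub_1_dominated N m :
  ps_dominated (corr_factor N m - 1)%ps (harmonic_tail N m).
Proof.
  intros [|k]; unfold ps_sub, ps_C.
  - rewrite corr_factor_coef_0, Rminus_diag, Rabs_R0. simpl. lra.
  - rewrite Rminus_0_r. apply corr_factor_dominated.
Qed.

Lemma alt_factor_dominated m :
  ps_dominated (ps_prod 1 m (fun j => ps_lin (/ INR j)) * ps_geom (- / INR (S m)))%ps
               (harmonic (S m)).
Proof.
  apply ps_dominated_mul; [apply harmonic_nonneg|apply inv_INR_nonneg| |].
  - apply (ps_dominated_prod 1 m _ (fun j => / INR j)); [intros; apply inv_INR_nonneg|].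
    intros i _. rewrite <- (Rabs_right (/ INR (1 + i))) at 2
      by apply Rle_ge, inv_INR_nonneg.
    apply ps_dominated_lin.
  - rewrite <- (Rabs_right (/ INR (S m))) at 2 by apply Rle_ge, inv_INR_nonneg.
    rewrite <- Rabs_Ropp. apply ps_dominated_geom.
Qed.

Lemma wz_err_term_bound N i n : (i < N)%nat ->
  Rabs ((alt_term (S i) * (corr_factor N (S i) - 1))%ps n) <=
  / INR (S i) ^ 2 * (INR n * (harmonic_tail N (S i) * harmonic N ^ (n - 1))).
Proof.
  intros Hi. unfold alt_term. simpl (S i - 1)%nat. rewrite Nat.sub_0_r.
  rewrite <- !ps_mul_assoc, ps_mul_C_l, Rabs_mult, Rabs_right
    by apply Rle_ge, inv_INR_pow_nonneg.
  apply Rmult_le_compat_l; [apply inv_INR_pow_nonneg|].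
  rewrite ps_mul_assoc. apply ps_mul_coef_bound.
  - split; [apply harmonic_tail_nonneg|apply harmonic_tail_le; lia].
  - eapply ps_dominated_le; [|apply alt_factor_dominated].
    split; [apply harmonic_nonneg|apply harmonic_le; lia].
  - apply corr_factor_sub_1_dominated.
  - unfold ps_sub, ps_C. rewrite corr_factor_coef_0. ring.
Qed.

Lemma wz_err_bound N n :
  Rabs (wz_err N n) <= INR n * harmonic N ^ (n - 1) * (2 * harmonic N / INR (S N)).
Proof.
  unfold wz_err. rewrite ps_sum_coef. eapply Rle_trans; [apply sum_lt_abs|].
  eapply Rle_trans; [apply sum_lt_le; intros i Hi; apply wz_err_term_bound, Hi|].
  rewrite (sum_lt_ext N _ (fun i => INR n * harmonic N ^ (n - 1)
                                     * (/ INR (S i) ^ 2 * harmonic_tail N (S i))))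
    by (intros; ring).
  rewrite sum_lt_scal. apply Rmult_le_compat_l.
  { apply Rmult_le_pos; [apply pos_INR|apply pow_le, harmonic_nonneg]. }
  (* [1 / ((i+1) (N-i)) = (1/(i+1) + 1/(N-i)) / (N+1)] *)
  apply (Rle_trans _ (sum_lt N (fun i => / INR (S N) * (/ INR (S i) + / INR (N - i))))).
  - apply sum_lt_le. intros i Hi.
    assert (HNi : 0 < INR (N - i)) by (apply lt_0_INR; lia).
    assert (Hi0 : 0 < INR (S i)) by (apply lt_0_INR; lia).
    apply (Rle_trans _ (/ INR (S i) ^ 2 * (INR (S i) * / INR (N - i)))).
    + apply Rmult_le_compat_l; [apply inv_INR_pow_nonneg|].
      replace (N - i)%nat with (S N - S i)%nat by lia. apply harmonic_tail_bound. lia.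
    + right. replace (INR (S N)) with (INR (S i) + INR (N - i))
        by (rewrite <- plus_INR; f_equal; lia).
      field. lra.
  - rewrite sum_lt_scal, sum_lt_add. fold (harmonic N).
    change (sum_lt N (fun i => / INR (N - i))) with (harmonic_tail N N).
    rewrite harmonic_tail_full. right. unfold Rdiv. ring.
Qed.

(** * Passage to the limit *)

Lemma exp_pow x k : exp x ^ k = exp (INR k * x).
Proof.
  induction k as [|k IH]; [simpl; rewrite Rmult_0_l, exp_0; reflexivity|].
  rewrite S_INR, <- tech_pow_Rmult, IH, <- exp_plus. f_equal. ring.
Qed.

Lemma pow_le_exp x j : 0 <= x -> (1 <= j)%nat -> x ^ j <= INR j ^ j * exp x.
Proof.
  intros Hx Hj. assert (Hj0 : 0 < INR j) by (apply lt_0_INR; lia).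
  assert (Hxj : 0 <= x / INR j) by (apply Rmult_le_pos; [lra|apply inv_INR_nonneg]).
  replace (x ^ j) with (INR j ^ j * (x / INR j) ^ j)
    by (rewrite <- Rpow_mult_distr; f_equal; field; lra).
  replace (exp x) with (exp (x / INR j) ^ j)
    by (rewrite exp_pow; f_equal; field; lra).
  apply Rmult_le_compat_l; [apply pow_le; lra|].
  apply pow_incr. pose proof (exp_ineq1_le (x / INR j)). lra.
Qed.

Lemma exp_inv_succ_le m : (1 <= m)%nat -> exp (/ INR (S m)) <= INR (S m) / INR m.
Proof.
  intros Hm. assert (Hm0 : 0 < INR m) by (apply lt_0_INR; lia).
  rewrite S_INR. apply (Rmult_le_reg_r (exp (- / (INR m + 1)))); [apply exp_pos|].
  rewrite <- exp_plus, Rplus_opp_r, exp_0.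
  apply (Rle_trans _ ((INR m + 1) / INR m * (1 + - / (INR m + 1)))); [right; field; lra|].
  apply Rmult_le_compat_l; [apply Rlt_le, Rdiv_lt_0_compat; lra|apply exp_ineq1_le].
Qed.

Lemma exp_harmonic_le N : (1 <= N)%nat -> exp (harmonic N) <= exp 1 * INR N.
Proof.
  induction 1 as [|m Hm IH].
  - unfold harmonic. simpl. rewrite Rplus_0_l, Rinv_1, Rmult_1_r. lra.
  - change (harmonic (S m)) with (harmonic m + / INR (S m)). rewrite exp_plus.
    assert (Hm0 : 0 < INR m) by (apply lt_0_INR; lia).
    apply (Rle_trans _ (exp 1 * INR m * (INR (S m) / INR m))); [|right; field; lra].
    apply Rmult_le_compat; [left; apply exp_pos|left; apply exp_pos|exact IH|].
    apply exp_inv_succ_le, Hm.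
Qed.

Lemma exp_harmonic_ge N : INR (S N) <= exp (harmonic N).
Proof.
  induction N as [|N IH].
  - unfold harmonic. simpl. rewrite exp_0. lra.
  - change (harmonic (S N)) with (harmonic N + / INR (S N)). rewrite exp_plus.
    assert (HN : 0 < INR (S N)) by (apply lt_0_INR; lia).
    pose proof (exp_ineq1_le (/ INR (S N))).
    apply (Rle_trans _ (INR (S N) * (1 + / INR (S N)))).
    + right. rewrite (S_INR (S N)). field. lra.
    + assert (0 < / INR (S N)) by (apply Rinv_0_lt_compat; lra).
      apply Rmult_le_compat; lra.
Qed.

Lemma harmonic_unbounded : is_lim_seq harmonic p_infty.
Proof.
  apply is_lim_seq_spec. intros M.
  pose proof is_lim_seq_INR as H. apply is_lim_seq_spec in H.
  destruct (H (exp M)) as [N0 HN0]. exists N0. intros n Hn.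
  apply exp_lt_inv. specialize (HN0 n Hn). pose proof (exp_harmonic_ge n).
  rewrite S_INR in *. lra.
Qed.

(* [x^(k+2) <= (k+2)^(k+2) e^x] and [e^(H_N) <= e N] give [H_N^(k+1) / (N+1) <= C / H_N]. *)
Lemma harmonic_pow_div_lim k : is_lim_seq (fun N => harmonic N ^ S k / INR (S N)) 0.
Proof.
  set (C := INR (S (S k)) ^ S (S k) * exp 1).
  apply (is_lim_seq_le_le_loc (fun _ => 0) _ (fun N => C * / harmonic N));
    [|apply is_lim_seq_const|].
  - exists 1%nat. intros N HN.
    pose proof (harmonic_pos N HN) as HH.
    assert (HN0 : 0 < INR (S N)) by (apply lt_0_INR; lia).
    assert (B : harmonic N * harmonic N ^ S k <= C * INR (S N)).
    { change (harmonic N * harmonic N ^ S k) with (harmonic N ^ S (S k)).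
      eapply Rle_trans; [apply pow_le_exp; lra || lia|].
      unfold C. rewrite Rmult_assoc. apply Rmult_le_compat_l; [apply pow_le, pos_INR|].
      eapply Rle_trans; [apply exp_harmonic_le; lia|].
      apply Rmult_le_compat_l; [left; apply exp_pos|]. apply le_INR. lia. }
    split.
    + apply Rmult_le_pos; [apply pow_le; lra|apply inv_INR_nonneg].
    + apply (Rmult_le_reg_l (harmonic N * INR (S N))); [nra|].
      replace (harmonic N * INR (S N) * (harmonic N ^ S k / INR (S N)))
        with (harmonic N * harmonic N ^ S k) by (field; lra).
      replace (harmonic N * INR (S N) * (C * / harmonic N)) with (C * INR (S N))
        by (field; lra).
      exact B.
  - replace (Finite 0) with (Rbar_mult C (Rbar_inv p_infty)) by (simpl; f_equal; ring).
    apply is_lim_seq_scal_l, is_lim_seq_inv; [apply harmonic_unbounded|discriminate].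
Qed.

Lemma wz_err_lim n : is_lim_seq (fun N => wz_err N n) 0.
Proof.
  apply is_lim_seq_abs_0.
  apply (is_lim_seq_le_le (fun _ => 0) _
           (fun N => 2 * INR n * (harmonic N ^ S (n - 1) / INR (S N)))).
  - intros N. split; [apply Rabs_pos|].
    eapply Rle_trans; [apply wz_err_bound|]. right. simpl. unfold Rdiv. ring.
  - apply is_lim_seq_const.
  - replace (Finite 0) with (Rbar_mult (2 * INR n) 0) by (simpl; f_equal; ring).
    apply is_lim_seq_scal_l, harmonic_pow_div_lim.
Qed.

Lemma mzv_part_nonneg s lo N : 0 <= mzv_part s lo N.
Proof.
  revert lo; induction s as [|a s IH]; intros lo; cbn [mzv_part]; [lra|].
  rewrite sum_range_sum_lt. apply sum_lt_nonneg. intros j.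
  apply Rmult_le_pos; [apply inv_INR_pow_nonneg|apply IH].
Qed.

Lemma mzv_part_mono s lo N : mzv_part s lo N <= mzv_part s lo (S N).
Proof.
  revert lo; induction s as [|a s IH]; intros lo; cbn [mzv_part]; [lra|].
  rewrite !sum_range_sum_lt. eapply Rle_trans.
  - apply sum_lt_le. intros i Hi. apply Rmult_le_compat_l; [apply inv_INR_pow_nonneg|apply IH].
  - apply sum_lt_le_len; [lia|]. intros j.
    apply Rmult_le_pos; [apply inv_INR_pow_nonneg|apply mzv_part_nonneg].
Qed.

Lemma sum_range_telescope_bound lo N f :
  (forall j, (1 <= j)%nat -> f j <= 2 / (INR j * INR (S j))) ->
  sum_range (S lo) N f <= 2 / INR (S lo).
Proof.
  intros Hf. rewrite sum_range_sum_lt.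
  assert (Ha : 0 < INR (S lo)) by (apply lt_0_INR; lia).
  assert (Htele : forall d, sum_lt d (fun i => 2 / INR (S lo + i) - 2 / INR (S (S lo + i)))
                            = 2 / INR (S lo) - 2 / INR (S lo + d)).
  { induction d as [|d IH]; [simpl; rewrite Nat.add_0_r; ring|].
    change (sum_lt (S d) ?f) with (sum_lt d f + f d). cbv beta.
    rewrite IH, Nat.add_succ_r. ring. }
  eapply Rle_trans.
  - apply (sum_lt_le _ _ (fun i => 2 / INR (S lo + i) - 2 / INR (S (S lo + i)))).
    intros i _. eapply Rle_trans; [apply Hf; lia|]. right.
    assert (0 < INR (S lo + i)) by (apply lt_0_INR; lia).
    rewrite (S_INR (S lo + i)). field. lra.
  - rewrite Htele. assert (0 <= 2 / INR (S lo + (S N - S lo)))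
      by (apply Rmult_le_pos; [lra|apply inv_INR_nonneg]). lra.
Qed.

Lemma mzv_part_bound r k lo N : (2 <= k)%nat ->
  mzv_part (repeat 1%nat r ++ [k]) lo N <= 2 / INR (S lo).
Proof.
  intros Hk. revert lo; induction r as [|r IH]; intros lo;
    cbn [repeat app mzv_part]; apply sum_range_telescope_bound; intros j Hj;
    assert (Hj1 : 1 <= INR j) by (apply (le_INR 1); exact Hj).
  - rewrite Rmult_1_r. apply (Rle_trans _ (/ INR j ^ 2)).
    + apply Rinv_le_contravar; [apply pow_lt; lra|apply Rle_pow; [lra|exact Hk]].
    + rewrite S_INR. replace (2 / (INR j * (INR j + 1))) with (/ (INR j * (INR j + 1) / 2))
        by (field; lra).
      apply Rinv_le_contravar; [nra|]. simpl. nra.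
  - apply (Rle_trans _ (/ INR j ^ 1 * (2 / INR (S j)))).
    + apply Rmult_le_compat_l; [apply inv_INR_pow_nonneg|apply IH].
    + right. rewrite pow_1, S_INR. field. lra.
Qed.

Lemma mzv_part_lim r k : (2 <= k)%nat ->
  is_lim_seq (fun N => mzv_part (repeat 1%nat r ++ [k]) 0 N) (mzv (repeat 1%nat r ++ [k])).
Proof.
  intros Hk. unfold mzv. apply Lim_seq_correct', (ex_finite_lim_seq_incr _ 2).
  - intros; apply mzv_part_mono.
  - intros N. eapply Rle_trans; [apply mzv_part_bound, Hk|]. simpl. lra.
Qed.

Lemma is_lim_seq_sum_lt k (u : nat -> nat -> R) (l : nat -> R) :
  (forall r, (r < k)%nat -> is_lim_seq (u r) (l r)) ->
  is_lim_seq (fun N => sum_lt k (fun r => u r N)) (sum_lt k l).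
Proof.
  induction k as [|k IH]; intros H; simpl; [apply is_lim_seq_const|].
  apply is_lim_seq_plus'; [apply IH; intros; apply H; lia|apply H; lia].
Qed.

Lemma alt_mzv_part_lim n :
  is_lim_seq (fun N => alt_mzv_part N 0 n)
    (sum_range 0 n (fun r => (-1) ^ (r + n) * mzv (repeat 1%nat r ++ [(n + 2 - r)%nat]))).
Proof.
  rewrite sum_range_0.
  apply (is_lim_seq_ext (fun N => sum_lt (S n) (alt_mzv_term N 0 n)));
    [intros N; unfold alt_mzv_part; rewrite sum_range_0; reflexivity|].
  apply (is_lim_seq_sum_lt (S n) (fun r N => alt_mzv_term N 0 n r)). intros r Hr.
  apply is_lim_seq_mult'; [apply is_lim_seq_const|apply mzv_part_lim; lia].
Qed.

Lemma star_series_even N lo m : star_series N lo (2 * m)%nat = mzsv_part (repeat 2%nat m) lo N.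
Proof. unfold star_series. rewrite Nat.even_mul, Nat.div2_double. reflexivity. Qed.

Lemma star_series_odd N lo m : star_series N lo (S (2 * m)) = 0.
Proof. unfold star_series. rewrite Nat.even_succ, Nat.odd_mul. reflexivity. Qed.

Theorem proposition4p2 (n : nat) :
  let S := sum_range 0 n
             (fun r => (-1) ^ (r + n) * mzv (repeat 1%nat r ++ (n + 2 - r)%nat :: nil)) in
  (forall m : nat, n = (2 * m)%nat -> S = mzsv (repeat 2%nat (m + 1))) /\
  (forall m : nat, n = (2 * m + 1)%nat -> S = 0).
Proof.
  intros lhs.
  assert (Hlim : is_lim_seq (fun N => star_series N 1 (n + 2)%nat) lhs).
  { apply (is_lim_seq_ext (fun N => alt_mzv_part N 0 n + wz_err N n));
      [intros N; symmetry; apply star_series_coef|].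
    rewrite <- (Rplus_0_r lhs).
    apply is_lim_seq_plus'; [apply alt_mzv_part_lim|apply wz_err_lim]. }
  split; intros m Hm.
  - replace (n + 2)%nat with (2 * (m + 1))%nat in Hlim by lia.
    apply (is_lim_seq_ext _ _ _ (fun N => star_series_even N 1 (m + 1))) in Hlim.
    unfold mzsv. erewrite is_lim_seq_unique by exact Hlim. reflexivity.
  - replace (n + 2)%nat with (S (2 * (m + 1))) in Hlim by lia.
    apply (is_lim_seq_ext _ _ _ (fun N => star_series_odd N 1 (m + 1))) in Hlim.
    apply is_lim_seq_unique in Hlim. rewrite Lim_seq_const in Hlim. now injection Hlim.
Qed.
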